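(* Let $\Gamma\subset\mathbb{F}_q[x]^n$ be an $\mathbb{F}_q[x]$-lattice of rank $n$ with $\mathrm{vol}(\Gamma)=q^m$, and let $\mu=\min_{0\ne v\in\Gamma}\deg v$. Then for every real $s\ge0$, $$\#\{v\in\Gamma:\deg v\le s\}\le q^{\max\left(0,\ n(s+1)-m,\ (n-1)(s+1-\mu)\right)}.$$
   Context: An $\mathbb{F}_q[x]$-lattice of rank $n$ is an $\mathbb{F}_q[x]$-submodule $\Gamma\subset\mathbb{F}_q[x]^n$ of finite index; $\mathrm{vol}(\Gamma)=[\mathbb{F}_q[x]^n:\Gamma]$. For $v=(v_1,\dots,v_n)$, $\deg v=\max_i\deg v_i$, with $\deg 0=-\infty$. *)

From HB Require Import structures.
From mathcomp Require Import all_boot all_order all_algebra.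
From mathcomp Require Import all_classical all_reals all_analysis.
Set Implicit Arguments. Unset Strict Implicit. Unset Printing Implicit Defensive.
Import Order.TTheory GRing.Theory Num.Theory.
Local Open Scope ring_scope.

Notation polyvec F n := ('rV[{poly F}]_n).

(* For v <> 0 this is the usual degree (a nat);
   for v = 0 we get 0 instead of -oo, which is harmless for the statement
   below since it is only compared with s >= 0 (0 satisfies deg 0 <= s
   either way) and mu is a minimum over nonzero vectors. *)
Definition vdeg (F : finFieldType) (n : nat) (v : polyvec F n) : nat :=
  \max_(i < n) (size (v ord0 i)).-1.

Definition is_submodule (F : finFieldType) (n : nat) (G : polyvec F n -> Prop) : Prop :=
  [/\ G 0,
      (forall u v, G u -> G v -> G (u + v)) &
      (forall (p : {poly F}) v, G v -> G (p *: v))].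

Definition has_index (F : finFieldType) (n : nat) (G : polyvec F n -> Prop) (N : nat) : Prop :=
  exists reps : seq (polyvec F n),
    [/\ size reps = N,
        (forall i j, (i < N)%N -> (j < N)%N -> i <> j -> ~ G (reps`_i - reps`_j)) &
        (forall v, exists2 r, r \in reps & G (v - r))].

Definition lattice_vol (F : finFieldType) (n : nat) (G : polyvec F n -> Prop) (N : nat) : Prop :=
  is_submodule G /\ has_index G N.

From HB Require Import structures.
From mathcomp Require Import all_boot all_order all_algebra.
From mathcomp Require Import all_classical all_reals all_analysis.
From mathcomp Require Import zify.
Import Order.TTheory GRing.Theory Num.Theory.
Local Open Scope ring_scope.
Set Implicit Arguments. Unset Strict Implicit. Unset Printing Implicit Defensive.

(* Write q = #|F| and B_k for the set of lattice vectors all of whose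
   coordinates have degree < k.  Vectors with coordinates of degree < K are
   encoded as n x K matrices over F, so for k <= K the set B_k is finite,
   of size at most q^(nK).  Fix K = floor s + 1, so that deg v <= s iff v \in B_K.
   Say that G "lifts at level k" if every c \in F^n is the vector of
   degree-k coefficients of some v \in B_(k+1); this property is inherited
   by k+1 (multiply by x).
   - If G lifts at level K, every vector reduces modulo G into B_K, so the
     q^m cosets of G contain disjoint translates of B_K: |B_K| q^m <= q^(nK).
   - Otherwise G lifts at no level k <= K.  The degree-k coefficient vectors
     of B_(k+1) then form a proper F-subspace of F^n, of size <= q^(n-1),
     and each fibre of this map is a translate of B_k; hence
     |B_(k+1)| <= q^(n-1) |B_k|.  Since B_mu = {0} by minimality of mu, we
     get |B_K| <= q^((n-1)(K-mu)).
   The theorem follows by taking real powers of q. *)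

Lemma rV_nonzero_dim (V : zmodType) n (v : 'rV[V]_n) : v != 0 -> (0 < n)%N.
Proof. by case: n v => // v; rewrite thinmx0 eqxx. Qed.

Section BoundedVectors.
Variables (F : finFieldType) (n : nat).
Implicit Types (u v w : 'rV[{poly F}]_n) (k K : nat).

Definition bounded k v : bool := [forall i, (size (v ord0 i) <= k)%N].

Definition coefs k v : 'rV[F]_n := \row_i (v ord0 i)`_k.

Lemma boundedP k v : reflect (forall i, (size (v ord0 i) <= k)%N) (bounded k v).
Proof. exact: forallP. Qed.

Lemma bounded_le k k' v : (k <= k')%N -> bounded k v -> bounded k' v.
Proof. by move=> kk' /boundedP bv; apply/boundedP=> i; apply: leq_trans (bv i) kk'. Qed.

Lemma boundedB k u v : bounded k u -> bounded k v -> bounded k (u - v).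
Proof.
move=> /boundedP bu /boundedP bv; apply/boundedP=> i; rewrite !mxE.
by apply: leq_trans (size_polyD _ _) _; rewrite size_polyN geq_max bu bv.
Qed.

Lemma boundedZC k (c : F) v : bounded k v -> bounded k (c%:P *: v).
Proof.
move=> /boundedP bv; apply/boundedP=> i; rewrite !mxE mul_polyC.
exact: leq_trans (size_scale_leq _ _) (bv i).
Qed.

Lemma boundedX k v : bounded k v -> bounded k.+1 ('X *: v).
Proof.
move=> /boundedP bv; apply/boundedP=> i; rewrite !mxE.
by apply: leq_trans (size_polyMleq _ _) _; rewrite size_polyX /=; exact: bv.
Qed.

Lemma bounded_coefs0 k v : bounded k.+1 v -> coefs k v = 0 -> bounded k v.
Proof.
move=> /boundedP bv /rowP c0; apply/boundedP=> i.
have := bv i; rewrite leq_eqVlt ltnS => /orP[/eqP sz|//].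
have /eqP : lead_coef (v ord0 i) = 0 by have := c0 i; rewrite !mxE lead_coefE sz.
by rewrite lead_coef_eq0 => /eqP ->; rewrite size_poly0.
Qed.

Lemma vdeg_bounded d v : (vdeg v <= d)%N = bounded d.+1 v.
Proof.
apply/bigmax_leqP/boundedP=> [vd i | bv i _]; first by have := vd i isT; lia.
by have := bv i; lia.
Qed.

Lemma bounded0_eq0 v : bounded 0 v -> v = 0.
Proof.
move=> /boundedP bv; apply/rowP=> i; rewrite mxE; apply/eqP.
by rewrite -size_poly_eq0 -leqn0 bv.
Qed.

Lemma coefsB k u v : coefs k (u - v) = coefs k u - coefs k v.
Proof. by apply/rowP=> i; rewrite !mxE coefB. Qed.

Lemma coefsZC k (c : F) v : coefs k (c%:P *: v) = c *: coefs k v.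
Proof. by apply/rowP=> i; rewrite !mxE coefCM. Qed.

Lemma coefsX k v : coefs k.+1 ('X *: v) = coefs k v.
Proof. by apply/rowP=> i; rewrite !mxE coefXM. Qed.

Definition pvec_of_mx K (M : 'M[F]_(n, K)) : 'rV[{poly F}]_n :=
  \row_i \poly_(j < K) (if insub j is Some j' then M i j' else 0).

Lemma coef_pvec_of_mx K (M : 'M[F]_(n, K)) i j :
  (pvec_of_mx M ord0 i)`_j = if insub j is Some j' then M i j' else 0.
Proof. by rewrite mxE coef_poly; case: insubP => [j' -> _|/negbTE ->]. Qed.

Lemma pvec_of_mx_inj K : injective (@pvec_of_mx K).
Proof.
move=> M N eMN; apply/matrixP=> i j.
have := congr1 (fun v : 'rV[{poly F}]_n => (v ord0 i)`_j) eMN.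
by rewrite /= !coef_pvec_of_mx valK.
Qed.

Lemma pvec_of_mx_onto K v : bounded K v -> exists M : 'M[F]_(n, K), pvec_of_mx M = v.
Proof.
move=> /boundedP bv; exists (\matrix_(i, j) (v ord0 i)`_j).
apply/rowP=> i; apply/polyP=> j; rewrite coef_pvec_of_mx.
case: insubP => [j' _ <-|]; first by rewrite mxE.
by rewrite -leqNgt => Kj; rewrite nth_default // (leq_trans (bv i) Kj).
Qed.

Lemma pvec_of_mxB K (M N : 'M[F]_(n, K)) :
  pvec_of_mx (M - N) = pvec_of_mx M - pvec_of_mx N.
Proof.
apply/rowP=> i; apply/polyP=> j; rewrite [LHS]coef_pvec_of_mx [in RHS]mxE.
rewrite coefD [(- pvec_of_mx N) _ _]mxE coefN !coef_pvec_of_mx.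
by case: insub => [j'|]; rewrite ?mxE ?subr0.
Qed.

Lemma pvec_of_mx0 K : pvec_of_mx (0 : 'M[F]_(n, K)) = 0.
Proof. by rewrite -(subrr (0 : 'M[F]_(n, K))) pvec_of_mxB subrr. Qed.

End BoundedVectors.

(* A set of vectors of F^n closed under c(a - b) and missing some vector c0
   (i.e. a proper subspace) has at most q^(n-1) elements: the q translates
   T + t c0 are pairwise disjoint. *)
Lemma card_proper_subspace (F : finFieldType) n (T : {set 'rV[F]_n}) (c0 : 'rV[F]_n) :
  (forall (c : F) a b, a \in T -> b \in T -> c *: (a - b) \in T) -> c0 \notin T ->
  (#|T| * #|F| <= #|F| ^ n)%N.
Proof.
move=> closedT c0T; pose f (x : F * 'rV[F]_n) := x.2 + x.1 *: c0.
have f_inj : {in finset.setX [set: F] T &, injective f}.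
  move=> [t a] [t' a'] /finset.setXP[_ aT] /finset.setXP[_ a'T]; rewrite /f /= => e.
  have tt' : t = t'.
    apply: contraNeq c0T => ntt'.
    have da : a - a' = (t' - t) *: c0.
      by rewrite scalerBl -[a](addrK (t *: c0)) e addrAC [a' + _]addrC addrK.
    have -> : c0 = (t' - t)^-1 *: (a - a').
      by rewrite da scalerA mulVf ?scale1r // subr_eq0 eq_sym.
    by apply: closedT.
  by rewrite tt' in e *; rewrite (addIr _ e).
have := max_card [set f x | x in finset.setX [set: F] T].
by rewrite (card_in_imset f_inj) cardsX cardsT card_mx mul1n mulnC.
Qed.

Lemma leq_cancel_pow q m a N : (0 < q)%N -> (N * q ^ m <= q ^ a)%N -> (N <= q ^ (a - m))%N.
Proof.
move=> q_gt0 Nle; rewrite -(leq_pmul2r (_ : 0 < q ^ m)%N) ?expn_gt0 ?q_gt0 //.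
by apply: leq_trans Nle _; rewrite -expnD leq_pexp2l //; lia.
Qed.

Section LatticeCounting.
Variables (F : finFieldType) (n : nat) (G : 'rV[{poly F}]_n -> Prop).
Hypothesis G_submod : is_submodule G.
Implicit Types (u v w : 'rV[{poly F}]_n) (k K : nat).

Lemma submod0 : G 0.
Proof. by case: G_submod. Qed.

Lemma submodD u v : G u -> G v -> G (u + v).
Proof. by case: G_submod => _ GD _; apply: GD. Qed.

Lemma submodZ (p : {poly F}) v : G v -> G (p *: v).
Proof. by case: G_submod => _ _ GZ; apply: GZ. Qed.

Lemma submodB u v : G u -> G v -> G (u - v).
Proof. by move=> Gu Gv; rewrite -scaleN1r; apply/submodD/submodZ. Qed.

Definition lifts k : Prop :=
  forall c : 'rV[F]_n, exists v, [/\ G v, bounded k.+1 v & coefs k v = c].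

Lemma liftsS k : lifts k -> lifts k.+1.
Proof.
move=> Lk c; have [v [Gv bv cv]] := Lk c.
by exists ('X *: v); rewrite coefsX; split; [apply: submodZ | apply: boundedX |].
Qed.

Lemma lifts_le k k' : (k <= k')%N -> lifts k -> lifts k'.
Proof.
move/subnK <-; elim: (k' - k)%N => [|j IHj] // Lk.
by rewrite addSn; apply/liftsS/IHj.
Qed.

(* If G lifts at level K, every vector is congruent modulo G to a vector of
   degree < K: cancel the top coefficients one degree at a time. *)
Lemma lifts_reduce K : lifts K -> forall w, exists2 p, bounded K p & G (w - p).
Proof.
move=> LK w; have [d bw] : exists d, bounded d w.
  exists (\max_(i < n) size (w ord0 i)); apply/boundedP=> i.
  exact: (@leq_bigmax _ (fun i : 'I_n => size (w ord0 i)) i).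
elim: d w bw => [|k IHk] w bw.
  by exists w; [apply: bounded_le bw | rewrite subrr; apply: submod0].
have [Kk | kK] := leqP K k; last first.
  by exists w; [apply: bounded_le bw | rewrite subrr; apply: submod0].
have [v [Gv bv cv]] := lifts_le Kk LK (coefs k w).
have bwv : bounded k (w - v).
  by apply: bounded_coefs0; [apply: boundedB | rewrite coefsB cv subrr].
have [p bp Gp] := IHk _ bwv; exists p => //.
by rewrite -[w](subrK v) addrAC; apply: submodD.
Qed.

Definition ball K k : {set 'M[F]_(n, K)} :=
  [set M | `[< G (pvec_of_mx M) >] && bounded k (pvec_of_mx M)].

Lemma ballP K k M :
  reflect (G (pvec_of_mx M) /\ bounded k (pvec_of_mx M)) (M \in ball K k).
Proof.
by rewrite inE; apply: (iffP andP) => -[/asboolP GM bM]; split => //; apply/asboolP.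
Qed.

Lemma size_le_card_ball d (l : seq 'rV[{poly F}]_n) :
  uniq l -> (forall v, v \in l -> G v /\ (vdeg v <= d)%N) ->
  (size l <= #|ball d.+1 d.+1|)%N.
Proof.
move=> l_uniq l_short; rewrite -(size_image (@pvec_of_mx F n d.+1)).
apply: uniq_leq_size => // v /l_short[Gv]; rewrite vdeg_bounded => bv.
have [M eM] := pvec_of_mx_onto bv; apply/fintype.imageP; exists M => //.
by apply/ballP; rewrite eM.
Qed.

(* If G has index N and lifts at level K, the N cosets of G meet the
   q^(nK) vectors of degree < K in disjoint translates of ball K K. *)
Lemma card_ball_index K N :
  has_index G N -> lifts K -> (#|ball K K| * N <= #|F| ^ (n * K))%N.
Proof.
move=> [reps [size_reps reps_distinct _]] LK.
have red (i : 'I_N) : exists M : 'M[F]_(n, K), `[< G (reps`_i - pvec_of_mx M) >].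
  have [p bp Gp] := lifts_reduce LK reps`_i; have [M eM] := pvec_of_mx_onto bp.
  by exists M; apply/asboolP; rewrite eM.
pose P i := xchoose (red i).
have GP (i : 'I_N) : G (reps`_i - pvec_of_mx (P i)).
  exact: (elimT (asboolP _) (xchooseP (red i))).
pose f (x : 'M[F]_(n, K) * 'I_N) := x.1 + P x.2.
have f_inj : {in finset.setX (ball K K) [set: 'I_N] &, injective f}.
  move=> [M i] [M' i'] /finset.setXP[/ballP[GM _] _] /finset.setXP[/ballP[GM' _] _].
  rewrite /f /= => e; have ii' : i = i'.
    case: (eqVneq i i') => // nii'; exfalso.
    apply: (reps_distinct i i') => //; first by move/val_inj; apply/eqP.
    have ePP : P i - P i' = M' - M by rewrite -[P i](addKr M) e addrA addrK addrC.
    have -> : reps`_i - reps`_i' = (reps`_i - pvec_of_mx (P i))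
        - (reps`_i' - pvec_of_mx (P i')) + (pvec_of_mx M' - pvec_of_mx M).
      by rewrite -pvec_of_mxB -ePP pvec_of_mxB opprB addrACA subrK addrAC subrr add0r.
    by apply: submodD; apply: submodB.
  by rewrite ii' in e *; rewrite (addIr _ e).
have := max_card [set f x | x in finset.setX (ball K K) [set: 'I_N]].
by rewrite (card_in_imset f_inj) cardsX cardsT card_ord card_mx.
Qed.

Definition lead_coefs k : {set 'rV[F]_n} :=
  [set c | `[< exists v, [/\ G v, bounded k.+1 v & coefs k v = c] >]].

Lemma lead_coefsP k c :
  reflect (exists v, [/\ G v, bounded k.+1 v & coefs k v = c]) (c \in lead_coefs k).
Proof. by rewrite inE; apply: (iffP idP) => /asboolP. Qed.

(* When G does not lift at level k, its leading coefficient vectors form a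
   proper subspace of F^n. *)
Lemma card_lead_coefs k : ~ lifts k -> (#|lead_coefs k| * #|F| <= #|F| ^ n)%N.
Proof.
move=> NLk; have [c0 c0N] : exists c0, c0 \notin lead_coefs k.
  apply: contrapT => all_in; apply: NLk => c; apply/lead_coefsP.
  by apply: contrapT => cN; apply: all_in; exists c; apply/negP.
apply: card_proper_subspace c0N => t _ _ /lead_coefsP[a [Ga ba <-]] /lead_coefsP[b [Gb bb <-]].
apply/lead_coefsP; exists (t%:P *: (a - b)); rewrite coefsZC coefsB.
by split=> //; [apply/submodZ/submodB | apply/boundedZC/boundedB].
Qed.

(* Sorting the vectors of degree <= k by their degree-k coefficients: each
   fibre is a translate of the set of lattice vectors of degree < k. *)
Lemma card_ball_fibres K k :
  (#|ball K k.+1| <= #|lead_coefs k| * #|ball K k|)%N.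
Proof.
pose top (M : 'M[F]_(n, K)) := coefs k (pvec_of_mx M).
pose rep c := odflt 0 [pick M in ball K k.+1 | top M == c].
have repP M : M \in ball K k.+1 -> rep (top M) \in ball K k.+1 /\ top (rep (top M)) = top M.
  by rewrite /rep => MB; case: pickP => [R /andP[RB /eqP]|/(_ M)] //=; rewrite MB eqxx.
pose f M := (top M, M - rep (top M)).
have f_inj : {in ball K k.+1 &, injective f}.
  move=> M M' _ _ [eT eD]; rewrite -eT in eD.
  by apply: (addIr (- rep (top M))).
have f_sub : f @: ball K k.+1 \subset finset.setX (lead_coefs k) (ball K k).
  apply/fintype.subsetP=> _ /imsetP[M MB ->]; have [RB eR] := repP M MB.
  have /ballP[GM bM] := MB; have /ballP[GR bR] := RB.
  apply/finset.setXP; split; first by apply/lead_coefsP; exists (pvec_of_mx M).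
  apply/ballP; rewrite pvec_of_mxB; split; first exact: submodB.
  by apply: bounded_coefs0; [apply: boundedB | rewrite coefsB -/(top _) -/(top _) eR subrr].
by have := subset_leq_card f_sub; rewrite (card_in_imset f_inj) cardsX.
Qed.

Lemma card_ball_step K k :
  ~ lifts k -> (#|ball K k.+1| * #|F| <= #|F| ^ n * #|ball K k|)%N.
Proof.
move=> NLk; apply: leq_trans (leq_mul (card_ball_fibres K k) (leqnn _)) _.
by rewrite mulnAC leq_mul2r card_lead_coefs ?orbT.
Qed.

Variable mu : nat.
Hypothesis mu_min : forall v, G v -> v != 0 -> (mu <= vdeg v)%N.

Lemma card_ball_small K k : (k <= mu)%N -> (#|ball K k| <= 1)%N.
Proof.
move=> kmu; rewrite -(cards1 (0 : 'M[F]_(n, K))); apply/subset_leq_card/fintype.subsetP.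
move=> M /ballP[GM bM]; rewrite inE; apply/eqP/pvec_of_mx_inj; rewrite pvec_of_mx0.
case: k kmu bM => [_ /bounded0_eq0 //|k kmu bM]; apply: contraTeq kmu => nz.
by rewrite -ltnNge ltnS; apply: leq_trans (mu_min GM nz) _; rewrite vdeg_bounded.
Qed.

Lemma card_ball_chain K : (0 < n)%N -> ~ lifts K ->
  forall j, (mu + j <= K)%N -> (#|ball K (mu + j)| <= #|F| ^ ((n - 1) * j))%N.
Proof.
move=> n_gt0 NLK; have q_gt0 : (0 < #|F|)%N by apply/card_gt0P; exists 0.
elim=> [|j IHj] muj; first by rewrite addn0 muln0 card_ball_small.
have {}muj : (mu + j < K)%N by rewrite -addnS.
have NLj : ~ lifts (mu + j) by apply: contra_not NLK; apply/lifts_le/ltnW.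
rewrite -(leq_pmul2r q_gt0) addnS; apply: leq_trans (card_ball_step K NLj) _.
rewrite mulnS expnD mulnAC -expnSr subn1 prednK // leq_mul2l.
by rewrite -subn1 IHj ?orbT // ltnW.
Qed.

Lemma card_ball_bound m K : (0 < n)%N -> has_index G (#|F| ^ m) ->
  (#|ball K K| <= #|F| ^ maxn (n * K - m) ((n - 1) * (K - mu)))%N.
Proof.
move=> n_gt0 idx; have q_gt0 : (0 < #|F|)%N by apply/card_gt0P; exists 0.
have [LK | NLK] := pselect (lifts K).
  apply: leq_trans (leq_cancel_pow q_gt0 (card_ball_index idx LK)) _.
  by rewrite leq_pexp2l // leq_maxl.
apply: leq_trans (_ : #|F| ^ ((n - 1) * (K - mu)) <= _)%N; last first.
  by rewrite leq_pexp2l // leq_maxr.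
have [muK | Kmu] := leqP mu K.
  by have := card_ball_chain n_gt0 NLK (j := K - mu); rewrite subnKC //; apply.
by apply: leq_trans (card_ball_small _ (ltnW Kmu)) _; rewrite expn_gt0 q_gt0.
Qed.

End LatticeCounting.

Lemma natr_powR_le (R : realType) (q e : nat) (x : R) :
  (0 < q)%N -> e%:R <= x -> (q ^ e)%:R <= q%:R `^ x.
Proof.
move=> q_gt0 ex; rewrite natrX -powR_mulrn ?ler0n //.
by apply: ler_powR => //; rewrite ler1n.
Qed.

Lemma natr_subn_le (R : realDomainType) (a b : nat) (x : R) :
  a%:R <= x -> (a - b)%:R <= Num.max 0 (x - b%:R).
Proof.
move=> ax; have [ba | ab] := leqP b a; last first.
  by rewrite (eqP (ltnW ab) : (a - b = 0)%N) le_max lexx.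
by rewrite natrB // le_max lerD2r ax orbT.
Qed.

Lemma exponent_le (R : realDomainType) (n m mu K : nat) (s : R) :
  (0 < n)%N -> K%:R <= s + 1 ->
  (maxn (n * K - m) ((n - 1) * (K - mu)))%:R <=
    Num.max 0 (Num.max (n%:R * (s + 1) - m%:R) ((n%:R - 1) * (s + 1 - mu%:R))).
Proof.
move=> n_gt0 Ks; have n1 : n%:R - 1 = (n - 1)%:R :> R by rewrite natrB.
have max0_le_l (x y : R) : Num.max 0 x <= Num.max 0 (Num.max x y).
  by rewrite ge_max !le_max !lexx !orbT.
have max0_le_r (x y : R) : Num.max 0 y <= Num.max 0 (Num.max x y).
  by rewrite ge_max !le_max !lexx !orbT.
have first_term : (n * K - m)%:R <= Num.max 0 (n%:R * (s + 1) - m%:R) :> R.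
  by apply: natr_subn_le; rewrite natrM ler_wpM2l.
have second_term :
    ((n - 1) * (K - mu))%:R <= Num.max 0 ((n%:R - 1) * (s + 1 - mu%:R)) :> R.
  rewrite n1 mulnBr mulrBr -!natrM; apply: natr_subn_le.
  by rewrite natrM ler_wpM2l.
rewrite /maxn; case: ltnP => _.
  exact: le_trans second_term (max0_le_r _ _).
exact: le_trans first_term (max0_le_l _ _).
Qed.

Theorem mainTheorem11 (R : realType) (F : finFieldType) (n m mu : nat)
  (G : 'rV[{poly F}]_n -> Prop) (s : R) :
  lattice_vol G (#|F| ^ m)%N ->
  (exists v, [/\ G v, v != 0 & vdeg v = mu]) ->
  (forall v, G v -> v != 0 -> (mu <= vdeg v)%N) ->
  0 <= s ->
  forall l : seq ('rV[{poly F}]_n),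
    uniq l ->
    (forall v, v \in l -> G v /\ (vdeg v)%:R <= s) ->
    (size l)%:R <= (#|F|%:R : R) `^
      Num.max 0 (Num.max (n%:R * (s + 1) - m%:R) ((n%:R - 1) * (s + 1 - mu%:R))).
Proof.
move=> [G_submod idx] [v0 [_ v0_nz _]] mu_min s_ge0 l l_uniq l_short.
have n_gt0 := rV_nonzero_dim v0_nz.
have q_gt0 : (0 < #|F|)%N by apply/card_gt0P; exists 0.
pose d := Num.truncn s.
have l_d v : v \in l -> G v /\ (vdeg v <= d)%N.
  by move=> /l_short[Gv vs]; rewrite truncn_ge_nat.
have dK : d.+1%:R <= s + 1 by rewrite -natr1 lerD2r truncn_le.
apply: le_trans (natr_powR_le q_gt0 (exponent_le m mu n_gt0 dK)).
rewrite ler_nat; apply: leq_trans (size_le_card_ball l_uniq l_d) _.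
exact: card_ball_bound.
Qed.
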